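(* Let $\mathbb{K}\in\{\mathbb{R},\mathbb{C}\}$ and let $\mathcal{X}$ be a topological $\mathbb{K}$-vector space whose topological dual $\mathcal{X}^{\ast}$ separates the points of $\mathcal{X}$. Let $(K_j)_{j\in J}$ be a net of nonempty weak*-compact subsets of $\mathcal{X}^{\ast}$ which is increasing ($K_{j_1}\subseteq K_{j_2}$ whenever $j_1\prec j_2$) and such that $K:=\overline{\bigcup_{j\in J}K_j}$ (weak*-closure) is weak*-compact. Then $(K_j)_{j\in J}$ converges to $K$ in the weak*-Hausdorff hypertopology and $K=\overline{\mathrm{Li}_{j\in J}K_j}=\overline{\mathrm{Ls}_{j\in J}K_j}$. Moreover, if $\mathcal{X}$ is separable then $K=\mathrm{Li}_{j\in J}K_j=\mathrm{Ls}_{j\in J}K_j$, i.e. $K$ is the Kuratowski–Painlevé limit of $(K_j)_{j\in J}$.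
   Context: Topological vector spaces are Hausdorff. $\mathcal{X}^{\ast}$ carries the weak* topology; closures are weak*-closures. The weak*-Hausdorff hypertopology on nonempty weak*-closed subsets of $\mathcal{X}^{\ast}$ is generated by the extended pseudometrics $d_H^{(A)}(F,\tilde F)=\max\{\sup_{\sigma\in F}\inf_{\tilde\sigma\in\tilde F}|(\sigma-\tilde\sigma)(A)|,\ \sup_{\tilde\sigma\in\tilde F}\inf_{\sigma\in F}|(\sigma-\tilde\sigma)(A)|\}$, $A\in\mathcal{X}$. For a net $(F_j)_{j\in J}$ of subsets of $\mathcal{X}^{\ast}$: $\mathrm{Li}_{j\in J}F_j$ is the set of $\sigma\in\mathcal{X}^{\ast}$ that are weak* limits of a net $(\sigma_j)_{j\in J}$ with $\sigma_j\in F_j$ for all $j\succ j_0$, for some $j_0\in J$; $\mathrm{Ls}_{j\in J}F_j$ is the set of $\sigma\in\mathcal{X}^{\ast}$ for which there are a subnet $(F_{s(i)})_{i\in I}$ and a net $(\sigma_i)_{i\in I}$ converging weak* to $\sigma$ with $\sigma_i\in F_{s(i)}$ for all $i\in I$. *)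

From HB Require Import structures.
From mathcomp Require Import all_boot all_order all_algebra.
From mathcomp Require Import all_classical all_reals all_analysis.

Set Implicit Arguments.
Unset Strict Implicit.
Unset Printing Implicit Defensive.

Import Order.TTheory GRing.Theory Num.Theory.
Import numFieldTopology.Exports.

Local Open Scope classical_set_scope.
Local Open Scope ring_scope.

Definition directed_set (J : Type) (le : J -> J -> Prop) : Prop :=
  inhabited J /\
  (forall j, le j j) /\
  (forall a b c, le a b -> le b c -> le a c) /\
  (forall a b, exists c, le a c /\ le b c).

Definition net_cvg (T : topologicalType) (J : Type) (le : J -> J -> Prop)
    (s : J -> T) (x : T) : Prop :=
  forall U, nbhs x U -> exists j0, forall j, le j0 j -> U (s j).

Section Dual.
Variables (K : numFieldType) (X : topologicalLmodType K).

(* The weak* topology on X^* is the topology of pointwise convergence,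
   i.e. the subspace topology induced by the product topology on
   functions X -> K. *)
Definition wstar := {ptws X -> K^o}.

Definition dual : set wstar :=
  [set f | (forall (a : K) (x y : X), f (a *: x + y) = a * f x + f y)
           /\ continuous (f : X -> K^o)].

Definition dual_separates_points : Prop :=
  forall x y : X, x <> y -> exists2 f, dual f & f x <> f y.

Definition separable_space : Prop :=
  exists D : set X, countable D /\ closure D = [set: X].

Definition wclosure (S : set wstar) : set wstar := closure S `&` dual.

Variables (J : Type) (le : J -> J -> Prop) (F : J -> set wstar).

Definition Li : set wstar :=
  [set s | dual s /\
     exists sig : J -> wstar,
       (forall j, dual (sig j)) /\
       (exists j0, forall j, le j0 j -> F j (sig j)) /\
       net_cvg le sig s].

(* Kuratowski-Painleve upper limit; subnets in the sense of
   "s(i) eventually above every j0". *)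
Definition Ls : set wstar :=
  [set s | dual s /\
     exists (I : Type) (leI : I -> I -> Prop) (sub : I -> J) (sig : I -> wstar),
       directed_set leI /\
       (forall j0, exists i0, forall i, leI i0 i -> le j0 (sub i)) /\
       (forall i, dual (sig i)) /\
       (forall i, F (sub i) (sig i)) /\
       net_cvg leI sig s].

End Dual.
Arguments dual {K} X.
Arguments wclosure {K X}.
Arguments Li {K X J}.
Arguments Ls {K X J}.
Arguments dual_separates_points {K} X.
Arguments separable_space {K} X.

Section Hausdorff.
Variables (R : realType) (K : numFieldType) (abs : K -> R).
Variable (X : topologicalLmodType K).
Local Open Scope ereal_scope.

Definition hdist (A : X) (F G : set (wstar X)) : \bar R :=
  maxe (ereal_sup [set ereal_inf [set (abs (s A - t A))%:E | t in G] | s in F])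
       (ereal_sup [set ereal_inf [set (abs (s A - t A))%:E | s in F] | t in G]).

(* Convergence of a net of sets in the weak*-Hausdorff hypertopology:
   convergence with respect to every generating pseudometric. *)
Definition whaus_cvg (J : Type) (le : J -> J -> Prop)
    (F : J -> set (wstar X)) (G : set (wstar X)) : Prop :=
  forall (A : X) (eps : R), (0 < eps)%R ->
    exists j0, forall j, le j0 j -> hdist A (F j) G < eps%:E.

End Hausdorff.

(* The statement of Proposition 3.14 for a fixed scalar field K whose
   modulus is abs : K -> R. *)
Definition prop3p14_for (R : realType) (K : numFieldType) (abs : K -> R) : Prop :=
  forall (X : topologicalLmodType K),
    hausdorff_space X ->
    dual_separates_points X ->
  forall (J : Type) (le : J -> J -> Prop) (Kj : J -> set (wstar X)),
    directed_set le ->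
    (forall j, Kj j !=set0 /\ Kj j `<=` dual X /\ compact (Kj j)) ->
    (forall j1 j2, le j1 j2 -> Kj j1 `<=` Kj j2) ->
    compact (wclosure (\bigcup_j Kj j)) ->
    let Klim := wclosure (\bigcup_j Kj j) in
    [/\ whaus_cvg abs le Kj Klim,
        Klim = wclosure (Li le Kj),
        Klim = wclosure (Ls le Kj) &
        (separable_space X -> Klim = Li le Kj /\ Klim = Ls le Kj)].

From HB Require Import structures.
From mathcomp Require Import all_boot all_order all_algebra.
From mathcomp Require Import all_classical all_reals all_analysis.
From mathcomp Require Import complex lra.
Import numFieldTopology.Exports.
Import Order.TTheory GRing.Theory Num.Theory.
Local Open Scope classical_set_scope.
Local Open Scope ring_scope.

(* Since K_j ⊆ K, one half of d_H^(A)(K_j, K) is zero; for the other half,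
   compactness of K (in its near-covering form) makes every point of K
   uniformly |.(A)|-close to K_j once j is large, because the K_j increase.
   The chain \bigcup_j K_j ⊆ Li ⊆ Ls ⊆ K gives the two closure identities.

   In the separable case fix a dense sequence (x_k) and s0 ∈ K.  The sets
   U_n = {u : |s0(x_k) - u(x_k)| < 1/(n+1) for k <= n} are neighbourhoods
   of s0, and a continuous functional adherent to every U_n agrees with s0 on
   the dense sequence, hence equals s0.  By compactness the U_n thus form a
   neighbourhood base of s0 relative to any weak*-compact set of functionals,
   and choosing in each K_j a point of U_n for the largest n such that K_j
   meets U_n yields a net in the K_j converging to s0: K ⊆ Li. *)

Definition tail_filter {J : Type} (le : J -> J -> Prop) : set_system J :=
  [set S | exists j0, forall j, le j0 j -> S j].

Lemma tail_filter_filter {J : Type} {le : J -> J -> Prop} :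
  directed_set le -> Filter (tail_filter le).
Proof.
case=> [[j0] [_ [trans ub]]]; apply: Build_Filter; first by exists j0.
  move=> P Q [j1 P_j1] [j2 Q_j2]; have [j [j1j j2j]] := ub j1 j2.
  by exists j => i ji; split; [apply: P_j1 | apply: Q_j2]; exact: trans ji.
by move=> P Q PQ [j1 P_j1]; exists j1 => j /P_j1 /PQ.
Qed.

Lemma net_cvgE (T : topologicalType) (J : Type) (le : J -> J -> Prop)
    (s : J -> T) (x : T) :
  net_cvg le s x <-> s @ tail_filter le --> x.
Proof. by []. Qed.

Lemma closure_squeeze {T : topologicalType} (A B : set T) :
  A `<=` B -> B `<=` closure A -> closure A = closure B.
Proof.
move=> AB BA; apply/seteqP; split; first exact: closureS.
apply: subset_trans (closureS BA) _.
by rewrite -(closure_id _).1 //; exact: closed_closure.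
Qed.

Lemma continuous_eq_on_dense {T U : topologicalType} {D : set T}
    {f g : T -> U} :
  hausdorff_space U -> closure D = [set: T] -> continuous f -> continuous g ->
  (forall x, D x -> f x = g x) -> f = g.
Proof.
move=> U_haus D_dense f_cont g_cont fg; apply/funext => x.
have : closure D x by rewrite D_dense.
move=> /(@within_nbhs_proper _ D x) D_proper.
apply: (@cvg_unique _ U_haus (f @ within D (nbhs x)) _ (f x) (g x)).
  exact: cvg_within_filter (f_cont x).
apply: cvg_trans (cvg_within_filter _ (g_cont x)).
by apply: near_eq_cvg; rewrite near_withinE; apply: filterE => y /fg ->.
Qed.

Lemma natSinv_gt0 (K : numFieldType) (n : nat) : 0 < (n.+1%:R^-1 : K).
Proof. by rewrite invr_gt0 ltr0Sn. Qed.

Lemma natSinv_le (K : numFieldType) {n m : nat} :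
  (n <= m)%N -> (m.+1%:R^-1 : K) <= n.+1%:R^-1.
Proof. by move=> nm; rewrite lef_pV2 ?posrE ?ltr0Sn // ler_nat ltnS. Qed.

Section WeakStar.
Context {K : numFieldType} {X : topologicalLmodType K}.

Lemma wstar_eval_continuous (A : X) :
  continuous (fun g : wstar X => g A : K^o).
Proof. exact: (@proj_continuous X (fun _ => K^o) A). Qed.

Lemma open_wstar_eval_ball (c : K) (A : X) (e : K) :
  open [set u : wstar X | `|c - u A| < e].
Proof.
apply: (@open_comp _ _ (fun u : wstar X => u A : K^o) (ball (c : K^o) e)).
  by move=> g _; exact: wstar_eval_continuous.
exact: ball_open.
Qed.

Lemma nbhs_wstar_eval (g : wstar X) (A : X) {e : K} :
  0 < e -> nbhs g [set u : wstar X | `|g A - u A| < e].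
Proof.
move=> e_gt0; apply: open_nbhs_nbhs; split; first exact: open_wstar_eval_ball.
by rewrite /= subrr normr0.
Qed.

Lemma separable_dense_seq : separable_space X ->
  exists e : nat -> X, closure (range e) = [set: X].
Proof.
move=> [D [/ocard_geP/surjPex [g D_sub] D_dense]].
exists (fun k => odflt 0 (g k)); apply/seteqP; split => // x _.
have : closure D x by rewrite D_dense.
apply: closureS => d Dd.
have [k _ gk] : (g @` setT) (Some d) by apply: D_sub; exists d.
by exists k => //; rewrite gk.
Qed.

Lemma wclosure_squeeze (A B : set (wstar X)) :
  A `<=` B -> B `<=` closure A -> wclosure A = wclosure B.
Proof. by move=> AB BA; rewrite /wclosure (closure_squeeze _ _ AB BA). Qed.

End WeakStar.

Section KuratowskiLimits.
Context {K : numFieldType} {X : topologicalLmodType K} {J : Type}.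
Variables (le : J -> J -> Prop) (F : J -> set (wstar X)).

Lemma bigcup_sub_Li : (forall j, F j `<=` dual X) ->
  (forall j1 j2, le j1 j2 -> F j1 `<=` F j2) -> \bigcup_j F j `<=` Li le F.
Proof.
move=> F_dual F_mono s [j0 _ F_s]; split; first exact: F_dual F_s.
exists (fun=> s); split; first by move=> _; exact: F_dual F_s.
split; first by exists j0 => j /F_mono; apply.
by move=> U /nbhs_singleton Us; exists j0.
Qed.

Lemma Li_sub_Ls : directed_set le -> Li le F `<=` Ls le F.
Proof.
move=> dir s [s_dual [sig [sig_dual [[j0 F_sig] sig_s]]]]; split => //.
have [_ [_ [trans ub]]] := dir.
have [sub sub_ge] := choice (ub j0).
exists J, le, sub, (sig \o sub); split => //; split.
  by move=> j1; exists j1 => i j1i; apply: trans j1i (sub_ge i).2.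
split; first by move=> i; exact: sig_dual.
split; first by move=> i; exact: F_sig (sub_ge i).1.
move=> U /sig_s [j1 near_s]; exists j1 => i j1i.
by apply: near_s; exact: trans j1i (sub_ge i).2.
Qed.

Lemma Ls_sub_closure : Ls le F `<=` closure (\bigcup_j F j).
Proof.
move=> s [_ [I [leI [sub [sig [[[i0] [reflI _]] [_ [_ [F_sig sig_s]]]]]]]]].
move=> U /sig_s [i1 near_s].
by exists (sig i1); split; [exists (sub i1) | apply: near_s; exact: reflI].
Qed.

End KuratowskiLimits.

Section HausdorffConvergence.
Context {K : numFieldType} {X : topologicalLmodType K} {J : Type}.
Variables (le : J -> J -> Prop) (Kj : J -> set (wstar X)).
Hypotheses (dir : directed_set le)
  (Kj_mono : forall j1 j2, le j1 j2 -> Kj j1 `<=` Kj j2).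

Lemma eventually_approx_compact (C : set (wstar X)) (A : X) (d : K) :
  compact C -> C `<=` closure (\bigcup_j Kj j) -> 0 < d ->
  exists j0, forall j, le j0 j ->
    forall t, C t -> exists2 s, Kj j s & `|s A - t A| < d.
Proof.
move=> C_cpt C_cl d_gt0; have d2_gt0 : 0 < d / 2 by rewrite divr_gt0.
have [|j0 cover] := (compact_near_coveringP C).1 C_cpt J (tail_filter le)
  (fun j t => exists2 s, Kj j s & `|s A - t A| < d) (tail_filter_filter dir).
  move=> t /C_cl t_cl.
  have [s [[j1 _ Kj1_s] ts]] := t_cl _ (nbhs_wstar_eval t A d2_gt0).
  exists ([set u | `|t A - u A| < d / 2], [set j | le j1 j]).
    by split; [exact: nbhs_wstar_eval | exists j1].
  move=> [u j] [/= tu j1j]; exists s; first exact: Kj_mono j1j _ Kj1_s.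
  rewrite (splitr d); apply: le_lt_trans (ler_distD (t A) _ _) _.
  by rewrite ltrD // distrC.
by exists j0.
Qed.

Lemma whaus_cvg_closure_bigcup (R : realType) (abs : K -> R) :
  (forall eps : R, 0 < eps ->
     exists2 d : K, 0 < d & forall z : K, `|z| < d -> abs z < eps) ->
  (forall j, Kj j `<=` dual X) ->
  compact (wclosure (\bigcup_j Kj j)) ->
  whaus_cvg abs le Kj (wclosure (\bigcup_j Kj j)).
Proof.
move=> abs_small Kj_dual cpt A eps eps_gt0.
have [d d_gt0 d_small] := abs_small (eps / 2) (divr_gt0 eps_gt0 (ltr0Sn _ 1)).
have [j0 approx] := eventually_approx_compact _ A _ cpt (@subIsetl _ _ _) d_gt0.
exists j0 => j j0j; apply: (@le_lt_trans _ _ (eps / 2)%:E); last first.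
  by rewrite lte_fin; lra.
rewrite ge_max; apply/andP; split; apply: ge_ereal_sup => _ [s s_in <-].
- apply: le_trans (ereal_inf_lbound _) _; first exists s => //.
    by split; [apply: subset_closure; exists j | exact: Kj_dual s_in].
  by rewrite lee_fin subrr; apply/ltW/d_small; rewrite normr0.
- have [t Kj_t st] := approx j j0j s s_in.
  apply: le_trans (ereal_inf_lbound _) _; first by exists t.
  by rewrite lee_fin; apply/ltW/d_small.
Qed.

End HausdorffConvergence.

Definition archimedean_natSinv (K : numFieldType) : Prop :=
  forall r : K, 0 < r -> exists n : nat, n.+1%:R^-1 < r.

Section DenseBalls.
Context {K : numFieldType} {X : topologicalLmodType K}.
Hypothesis archi : archimedean_natSinv K.
Variables (e : nat -> X) (s0 : wstar X).
Hypotheses (e_dense : closure (range e) = [set: X]) (s0_dual : dual X s0).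

Definition dense_ball (n : nat) : set (wstar X) :=
  [set u | forall k, (k <= n)%N -> `|s0 (e k) - u (e k)| < n.+1%:R^-1].

Lemma dense_ball_le {n m : nat} :
  (n <= m)%N -> dense_ball m `<=` dense_ball n.
Proof.
move=> nm u u_m k kn; apply: lt_le_trans (u_m k (leq_trans kn nm)) _.
exact: natSinv_le.
Qed.

Lemma nbhs_dense_ball (n : nat) : nbhs s0 (dense_ball n).
Proof.
have near_k (k : 'I_n.+1) := nbhs_wstar_eval s0 (e k) (natSinv_gt0 K n).
apply: filterS (filter_forall _ near_k) => u u_n k kn.
exact: (u_n (@Ordinal n.+1 k kn)).
Qed.

Lemma dense_ball_cluster_eq (c : wstar X) : dual X c ->
  (forall n, closure (dense_ball n) c) -> c = s0.
Proof.
move=> c_dual c_cl.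
apply: (continuous_eq_on_dense (@norm_hausdorff _ K^o) e_dense c_dual.2
  s0_dual.2) => _ [k _ <-].
apply/eqP; apply: contraT => c_neq.
set r : K := `|s0 (e k) - c (e k)|.
have r_gt0 : 0 < r by rewrite normr_gt0 subr_eq0 eq_sym.
have [n0 n0_small] := archi _ (divr_gt0 r_gt0 (ltr0Sn _ 1)).
pose N := maxn n0 k.
have N_small : N.+1%:R^-1 < r / 2.
  exact: le_lt_trans (natSinv_le K (leq_maxl n0 k)) n0_small.
have [v [v_N cv]] := c_cl N _ (nbhs_wstar_eval c (e k) (natSinv_gt0 _ N)).
have : r < r / 2 + r / 2.
  apply: le_lt_trans (ler_distD (v (e k)) _ _) _.
  rewrite ltrD //; first exact: lt_trans (v_N k (leq_maxr _ _)) N_small.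
  by rewrite distrC; exact: lt_trans cv N_small.
by rewrite -splitr ltxx.
Qed.

Lemma compact_meets_dense_balls (C : set (wstar X)) :
  compact C -> C `<=` dual X -> (forall n, C `&` dense_ball n !=set0) -> C s0.
Proof.
move=> C_cpt C_dual C_meets.
pose G := filter_from [set: nat] (fun n => C `&` dense_ball n).
have G_proper : ProperFilter G.
  apply: filter_from_proper => [|n _]; last exact: C_meets.
  apply: filter_fromT_filter => [|n m]; first by exists 0%N.
  exists (maxn n m) => u [Cu u_nm].
  split; split => //; [exact: dense_ball_le (leq_maxl n m) _ u_nm |
                       exact: dense_ball_le (leq_maxr n m) _ u_nm].
have G_C : G C by exists 0%N => // u [].
have [c [Cc c_cl]] := C_cpt G G_proper G_C.
suff <- : c = s0 by [].
apply: dense_ball_cluster_eq (C_dual _ Cc) _ => n B c_B.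
have [|v [[_ v_n] Bv]] := c_cl (C `&` dense_ball n) B _ c_B; first by exists n.
by exists v.
Qed.

Lemma compact_dense_ball_sub (C : set (wstar X)) (x : X) (eps : K) :
  compact C -> C `<=` dual X -> 0 < eps ->
  exists n, C `&` dense_ball n `<=` [set u | `|s0 x - u x| < eps].
Proof.
move=> C_cpt C_dual eps_gt0; apply: contrapT => no_n.
suff : (C `&` ~` [set u | `|s0 x - u x| < eps]) s0.
  by case=> _; apply; rewrite /= subrr normr0.
apply: compact_meets_dense_balls => [||n].
- apply: compact_closedI C_cpt _; rewrite closedC; exact: open_wstar_eval_ball.
- by move=> u [/C_dual].
- apply: contrapT => C'_miss; apply: no_n; exists n => u [Cu u_n].
  by apply: contrapT => far; apply: C'_miss; exists u.
Qed.

Lemma compact_exists_deepest (C : set (wstar X)) :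
  compact C -> C `<=` dual X -> C !=set0 ->
  exists2 s, C s & forall n, C `&` dense_ball n !=set0 -> dense_ball n s.
Proof.
move=> C_cpt C_dual [s1 Cs1].
have [C_s0 | C_not_s0] := pselect (C s0).
  by exists s0 => // n _; exact: nbhs_singleton (nbhs_dense_ball n).
have miss : exists n, ~~ `[< C `&` dense_ball n !=set0 >].
  apply: contrapT => /forallNP all_meet; apply: C_not_s0.
  apply: compact_meets_dense_balls => // n.
  by apply: contrapT => C_miss; apply: (all_meet n); exact/asboolPn.
case: (ex_minnP miss) => N /asboolPn N_miss N_min.
have meets_lt n : C `&` dense_ball n !=set0 -> (n < N)%N.
  move=> [u [Cu u_n]]; rewrite ltnNge; apply/negP => Nn.
  by apply: N_miss; exists u; split => //; exact: dense_ball_le Nn _ u_n.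
case: N N_miss N_min meets_lt => [|m] _ N_min meets_lt.
  by exists s1 => // n /meets_lt.
have [s [Cs s_m]] : C `&` dense_ball m !=set0.
  by apply: contrapT => /asboolPn /N_min; rewrite ltnn.
exists s => // n /meets_lt n_le_m.
exact: dense_ball_le (n_le_m : (n <= m)%N) _ s_m.
Qed.

End DenseBalls.

Section SeparableLi.
Context {K : numFieldType} {X : topologicalLmodType K} {J : Type}.
Hypothesis archi : archimedean_natSinv K.
Variables (e : nat -> X) (le : J -> J -> Prop) (Kj : J -> set (wstar X)).
Hypotheses (e_dense : closure (range e) = [set: X]) (dir : directed_set le)
  (Kj_cpt : forall j, Kj j !=set0 /\ Kj j `<=` dual X /\ compact (Kj j))
  (Kj_mono : forall j1 j2, le j1 j2 -> Kj j1 `<=` Kj j2).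

Lemma wclosure_bigcup_sub_Li : compact (wclosure (\bigcup_j Kj j)) ->
  wclosure (\bigcup_j Kj j) `<=` Li le Kj.
Proof.
move=> cpt s0 [s0_cl s0_dual].
have Kj_dual j : Kj j `<=` dual X by case: (Kj_cpt j) => _ [].
have deepest j : exists s, Kj j s /\
    forall n, Kj j `&` dense_ball e s0 n !=set0 -> dense_ball e s0 n s.
  have [Kj_ne [_ Kj_c]] := Kj_cpt j.
  have [s Kj_s s_deep] :=
    compact_exists_deepest archi _ _ e_dense s0_dual _ Kj_c (Kj_dual j) Kj_ne.
  by exists s.
have [sig sig_spec] := choice deepest.
have [[j0] _] := dir; have tail_F := tail_filter_filter dir.
split => //; exists sig.
split; first by move=> j; exact: Kj_dual (sig_spec j).1.
split; first by exists j0 => j _; exact: (sig_spec j).1.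
apply/net_cvgE/pointwise_cvgP => x.
apply/cvgrPdist_lt => eps eps_gt0.
have [n sub_eps] := compact_dense_ball_sub archi _ _ e_dense s0_dual _ x _ cpt
  (@subIsetr _ _ _) eps_gt0.
have [s1 [[j1 _ Kj1_s1] s1_n]] := s0_cl _ (nbhs_dense_ball e s0 n).
exists j1 => j j1j; apply: sub_eps; split.
  split; last exact: Kj_dual (sig_spec j).1.
  by apply: subset_closure; exists j => //; exact: (sig_spec j).1.
by apply: (sig_spec j).2; exists s1; split => //; exact: Kj_mono j1j _ Kj1_s1.
Qed.

End SeparableLi.

Lemma prop3p14_for_archimedean (R : realType) (K : numFieldType)
    (abs : K -> R) :
  archimedean_natSinv K ->
  (forall eps : R, 0 < eps ->
     exists2 d : K, 0 < d & forall z : K, `|z| < d -> abs z < eps) ->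
  prop3p14_for abs.
Proof.
move=> archi abs_small X _ _ J le Kj dir Kj_cpt Kj_mono cpt Klim.
have Kj_dual j : Kj j `<=` dual X by case: (Kj_cpt j) => _ [].
have bigcup_Li := bigcup_sub_Li le Kj Kj_dual Kj_mono.
have Li_Ls := Li_sub_Ls le Kj dir.
have Ls_Klim : Ls le Kj `<=` Klim.
  by move=> s Ls_s; split; [exact: Ls_sub_closure le Kj s Ls_s | case: Ls_s].
split.
- exact: whaus_cvg_closure_bigcup le Kj dir Kj_mono R abs abs_small Kj_dual
    cpt.
- by apply: wclosure_squeeze bigcup_Li _ => s /Li_Ls /Ls_Klim [].
- by apply: wclosure_squeeze (subset_trans bigcup_Li Li_Ls) _ => s /Ls_Klim [].
- move=> /separable_dense_seq [e e_dense].
  have Klim_Li :=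
    wclosure_bigcup_sub_Li archi _ _ _ e_dense dir Kj_cpt Kj_mono cpt.
  split; apply/seteqP; split => //; first by move=> s /Li_Ls /Ls_Klim.
  exact: subset_trans Klim_Li Li_Ls.
Qed.

Lemma archimedean_natSinv_real (R : archiRealFieldType) : archimedean_natSinv R.
Proof.
move=> r r_gt0; have [N _ N_small] := near_infty_natSinv_lt (PosNum r_gt0).
by exists N; apply: N_small => /=.
Qed.

Lemma archimedean_natSinv_complex (R : realType) : archimedean_natSinv R[i].
Proof.
move=> [a b]; rewrite ltcE /= => /andP [/eqP -> a_gt0].
have [n n_small] := archimedean_natSinv_real _ _ a_gt0; exists n.
by rewrite -(rmorph_nat (real_complex R)) -rmorphV ?unitfE ?pnatr_eq0 // ltcR.
Qed.

Theorem proposition3p14 (R : realType) :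
  prop3p14_for (fun x : R => `|x|) /\
  prop3p14_for (fun z : complex.complex R => complex.Re `|z|).
Proof.
split; apply: prop3p14_for_archimedean.
- exact: archimedean_natSinv_real.
- by move=> eps eps_gt0; exists eps.
- exact: archimedean_natSinv_complex.
- move=> eps eps_gt0; exists (eps%:C)%C; first by rewrite ltcR.
  by move=> z; rewrite ltcE /= => /andP [_].
Qed.
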